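(* Let $n\ge2$, and suppose a finite string of integers $\Sigma$ is obtained from $(2,n+1,2)$ by a finite sequence of operations, each of one of the following two types: (1) $(n_1,n_2,\dots,n_{b-1},n_b)\mapsto(2,n_1,n_2,\dots,n_{b-1},n_b+1)$; (2) $(n_1,n_2,\dots,n_{b-1},n_b)\mapsto(n_1+1,n_2,\dots,n_{b-1},n_b,2)$. Then the negative fraction of $\Sigma$ equals $m^2n/(mnk+1)$ for some integers $m>k>0$ with $\gcd(m,k)=1$. Moreover, the negative fraction of either $\Sigma$ or of the reverse of $\Sigma$ equals $$[c_s,c_{s-1},\dots,c_2,c_1,1,n-1,c_1+1,c_2,\dots,c_s]^+$$ for some $s\ge1$ and some integers $c_1,\dots,c_s\ge1$. When $s=1$ this expression is to be read as $[c_1,1,n-1,c_1+1]^+$.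
   Context: For integers $b_i\ge2$, $$[b_1,\dots,b_k]^-=b_1-\cfrac{1}{b_2-\cfrac{1}{\ddots-\cfrac{1}{b_k}}}.$$ For integers $a_i\ge1$, $$[a_1,\dots,a_h]^+=a_1+\cfrac{1}{a_2+\cfrac{1}{\ddots+\cfrac{1}{a_h}}}.$$ The negative fraction of a string $(b_1,\dots,b_k)$ is $[b_1,\dots,b_k]^-$. The reverse of $(b_1,\dots,b_k)$ is $(b_k,\dots,b_1)$. *)

From HB Require Import structures.
From mathcomp Require Import all_boot all_order all_algebra.
Set Implicit Arguments. Unset Strict Implicit. Unset Printing Implicit Defensive.
Import Order.TTheory GRing.Theory Num.Theory.
Local Open Scope ring_scope.

(* negative continued fraction [b_1,...,b_k]^- as a rational; [::] ↦ 0 (never used) *)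
Fixpoint negfrac (s : seq nat) : rat :=
  match s with
  | [::] => 0
  | [:: b] => b%:R
  | b :: t => b%:R - (negfrac t)^-1
  end.

Fixpoint posfrac (s : seq nat) : rat :=
  match s with
  | [::] => 0
  | [:: a] => a%:R
  | a :: t => a%:R + (posfrac t)^-1
  end.

Inductive reach (n : nat) : seq nat -> Prop :=
  | reach0 : reach n [:: 2%N; n.+1; 2%N]
  | reach1 (s : seq nat) (x : nat) :
      reach n (rcons s x) -> reach n (2%N :: rcons s x.+1)
  | reach2 (x : nat) (s : seq nat) :
      reach n (x :: s) -> reach n (x.+1 :: rcons s 2%N).

From HB Require Import structures.
From mathcomp Require Import all_boot all_order all_algebra.
From mathcomp Require Import ring lra.
Set Implicit Arguments. Unset Strict Implicit. Unset Printing Implicit Defensive.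
Import Order.TTheory GRing.Theory Num.Theory.
Local Open Scope ring_scope.

(* A string b_1 ... b_k is encoded by the product of the matrices
   [[b_i, -1], [1, 0]] (negative fractions) or [[a_i, 1], [1, 0]] (positive
   fractions); the fraction is the ratio of the first column.  We prove:
   - both operations (1) and (2) act on the negative matrix by fixed left and
     right multiplications, which map the explicit matrix [NInv n k k'] (with
     m = k + k') to [NInv n (k + k') k'] resp. [NInv n k (k + k')].  Starting
     from (k, k') = (1, 1) for (2, n+1, 2), every reachable string has matrix
     [NInv n k k'] with k, k' > 0 coprime; its ratio is m^2 n / (m n k + 1),
     and that of the reversed string is m^2 n / (m n k' + 1);
   - the palindromic positive string  c_s..c_1, 1, n-1, c_1+1, c_2..c_s  has
     ratio p^2 n / (p n q + 1), where p/q = [c_s, ..., c_1, 1]^+ and s is odd;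
   - along the same derivation one can keep such an expansion whose value
     p/q is m/k or m/k' (a Stern-Brocot style induction), which gives the
     second claim for Sigma or for its reverse. *)

Section TwoByTwo.
Variable R : comPzRingType.

Record mx2 := Mx2 { e11 : R; e12 : R; e21 : R; e22 : R }.

Definition mmul (X Y : mx2) : mx2 :=
  Mx2 (e11 X * e11 Y + e12 X * e21 Y) (e11 X * e12 Y + e12 X * e22 Y)
      (e21 X * e11 Y + e22 X * e21 Y) (e21 X * e12 Y + e22 X * e22 Y).

Definition mone : mx2 := Mx2 1 0 0 1.

Lemma mmulA (X Y Z : mx2) : mmul X (mmul Y Z) = mmul (mmul X Y) Z.
Proof. by case: X Y Z => ???? [????] [????]; rewrite /mmul /=; congr Mx2; ring. Qed.

Lemma mmul1m (X : mx2) : mmul mone X = X.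
Proof. by case: X => ????; rewrite /mmul /=; congr Mx2; ring. Qed.

Lemma mmulm1 (X : mx2) : mmul X mone = X.
Proof. by case: X => ????; rewrite /mmul /=; congr Mx2; ring. Qed.

(* Transpose, and transpose conjugated by diag(1,-1): both reverse products. *)
Definition mtr (X : mx2) : mx2 := Mx2 (e11 X) (e21 X) (e12 X) (e22 X).
Definition mjt (X : mx2) : mx2 := Mx2 (e11 X) (- e21 X) (- e12 X) (e22 X).

Lemma mtr_mul (X Y : mx2) : mtr (mmul X Y) = mmul (mtr Y) (mtr X).
Proof. by case: X Y => ???? [????]; rewrite /mmul /mtr /=; congr Mx2; ring. Qed.

Lemma mjt_mul (X Y : mx2) : mjt (mmul X Y) = mmul (mjt Y) (mjt X).
Proof. by case: X Y => ???? [????]; rewrite /mmul /mjt /=; congr Mx2; ring. Qed.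

Definition mdet (X : mx2) : R := e11 X * e22 X - e12 X * e21 X.

Lemma mdet_mul (X Y : mx2) : mdet (mmul X Y) = mdet X * mdet Y.
Proof. by case: X Y => ???? [????]; rewrite /mdet /mmul /=; ring. Qed.

Definition mprod (g : nat -> mx2) (s : seq nat) : mx2 :=
  foldr (fun b X => mmul (g b) X) mone s.

Lemma mprod_cons (g : nat -> mx2) (b : nat) (s : seq nat) :
  mprod g (b :: s) = mmul (g b) (mprod g s).
Proof. by []. Qed.

Lemma mprod1 (g : nat -> mx2) (b : nat) : mprod g [:: b] = g b.
Proof. exact: mmulm1. Qed.

Lemma mprod_cat (g : nat -> mx2) (s1 s2 : seq nat) :
  mprod g (s1 ++ s2) = mmul (mprod g s1) (mprod g s2).
Proof. by elim: s1 => [|b s IH] /=; rewrite ?mmul1m // IH mmulA. Qed.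

Lemma mprod_rcons (g : nat -> mx2) (s : seq nat) (b : nat) :
  mprod g (rcons s b) = mmul (mprod g s) (g b).
Proof. by rewrite -cats1 mprod_cat /= mmulm1. Qed.

Lemma mprod_rev (f : mx2 -> mx2) (g : nat -> mx2) (s : seq nat) :
  (forall X Y, f (mmul X Y) = mmul (f Y) (f X)) -> f mone = mone ->
  (forall b, f (g b) = g b) -> mprod g (rev s) = f (mprod g s).
Proof.
move=> f_mul f_one f_g; elim: s => [|b s IH] /=; first by rewrite f_one.
by rewrite rev_cons mprod_rcons IH f_mul f_g.
Qed.

Lemma mdet_mprod (g : nat -> mx2) (c : R) (s : seq nat) :
  (forall b, mdet (g b) = c) -> mdet (mprod g s) = c ^+ size s.
Proof.
move=> det_g; elim: s => [|b s IH] /=; first by rewrite /mdet /=; ring.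
by rewrite mdet_mul det_g IH exprS.
Qed.

Definition negm (b : nat) : mx2 := Mx2 b%:R (-1) 1 0.
Definition posm (b : nat) : mx2 := Mx2 b%:R 1 1 0.
Definition upshear : mx2 := Mx2 1 1 0 1.
Definition lowshear : mx2 := Mx2 1 0 (-1) 1.

Lemma negm_succ_r (x : nat) : negm x.+1 = mmul (negm x) lowshear.
Proof. by rewrite /mmul /=; congr Mx2; ring. Qed.

Lemma negm_succ_l (x : nat) : negm x.+1 = mmul upshear (negm x).
Proof. by rewrite /mmul /=; congr Mx2; ring. Qed.

Lemma posm_succ (x : nat) : posm x.+1 = mmul upshear (posm x).
Proof. by rewrite /mmul /=; congr Mx2; ring. Qed.

Lemma posm_11 (d : nat) : mmul (mmul (posm 1) (posm 1)) (posm d) = mmul (negm 2) (posm d.+1).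
Proof. by rewrite /mmul /=; congr Mx2; ring. Qed.

Lemma posm_1S (d : nat) : mmul (posm 1) (posm d.+1) = mmul (mmul (negm 2) (posm 1)) (posm d).
Proof. by rewrite /mmul /=; congr Mx2; ring. Qed.

Definition colsum (X : mx2) : R * R := (e11 X + e12 X, e21 X + e22 X).

Lemma colsum_upshear (X : mx2) :
  colsum (mmul upshear X) = ((colsum X).1 + (colsum X).2, (colsum X).2).
Proof. by case: X => ????; rewrite /colsum /mmul /=; congr pair; ring. Qed.

Lemma colsum_negm2 (X : mx2) :
  colsum (mmul (negm 2) X) = (2 * (colsum X).1 - (colsum X).2, (colsum X).1).
Proof. by case: X => ????; rewrite /colsum /mmul /=; congr pair; ring. Qed.

End TwoByTwo.

Arguments mone {R}.
Arguments negm {R}.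
Arguments posm {R}.
Arguments upshear {R}.
Arguments lowshear {R}.

Definition nmat (s : seq nat) : mx2 rat := mprod negm s.
Definition pmat (s : seq nat) : mx2 rat := mprod posm s.
Definition ratio (X : mx2 rat) : rat := e11 X / e21 X.

Lemma nmat_rev (s : seq nat) : nmat (rev s) = mjt (nmat s).
Proof.
apply: mprod_rev; [exact: mjt_mul | | move=> b];
  by rewrite /mjt /=; congr Mx2; rewrite ?oppr0 ?opprK.
Qed.

Lemma pmat_rev (s : seq nat) : pmat (rev s) = mtr (pmat s).
Proof. by apply: mprod_rev; [exact: mtr_mul | | ]. Qed.

Lemma pmat_det (s : seq nat) : mdet (pmat s) = (-1) ^+ size s.
Proof. by apply: mdet_mprod => b; rewrite /mdet /=; ring. Qed.

Lemma negfrac_nmat (s : seq nat) : s != [::] -> all (leq 2) s ->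
  0 < e21 (nmat s) < e11 (nmat s) /\ negfrac s = ratio (nmat s).
Proof.
elim: s => [//|b t IH] _ /andP[b2 t2].
have b2r : 2 <= b%:R :> rat by rewrite (ler_nat _ 2).
case: t IH t2 => [|c t] IH t2.
  rewrite /nmat /ratio mprod1 /= divr1; split=> //; lra.
have [/andP[y0 yx] IHf] := IH isT t2.
have -> : negfrac [:: b, c & t] = b%:R - (negfrac (c :: t))^-1 by [].
rewrite IHf /nmat /ratio mprod_cons -/(nmat (c :: t)); move: y0 yx.
case: (nmat (c :: t)) => x11 x12 x21 x22 /= y0 yx.
have bx : 2 * x11 <= b%:R * x11 by rewrite ler_wpM2r //; lra.
split; first by apply/andP; split; lra.
by field; apply/andP; split; rewrite gt_eqF //; lra.
Qed.

Lemma posfrac_pmat (s : seq nat) : s != [::] -> all (leq 1) s ->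
  0 < e11 (pmat s) /\ 0 < e21 (pmat s) /\ posfrac s = ratio (pmat s).
Proof.
elim: s => [//|a t IH] _ /andP[a1 t1].
have a1r : 1 <= a%:R :> rat by rewrite (ler_nat _ 1).
case: t IH t1 => [|c t] IH t1.
  rewrite /pmat /ratio mprod1 /= divr1; split; lra.
have [x0 [y0 IHf]] := IH isT t1.
have -> : posfrac [:: a, c & t] = a%:R + (posfrac (c :: t))^-1 by [].
rewrite IHf /pmat /ratio mprod_cons -/(pmat (c :: t)); move: x0 y0.
case: (pmat (c :: t)) => x11 x12 x21 x22 /= x0 y0.
have ax : x11 <= a%:R * x11 by rewrite ler_peMl //; lra.
split; first lra; split; first lra.
by field; apply/andP; split; rewrite gt_eqF.
Qed.

Definition NInv (n k k' : nat) : mx2 rat :=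
  let m := (k + k')%N in
  Mx2 ((m ^ 2 * n)%N)%:R (- ((m * n * k' + 1)%N)%:R)
      ((m * n * k + 1)%N)%:R (- ((n * k * k' + 1)%N)%:R).

Lemma NInv_base (n : nat) : nmat [:: 2%N; n.+1; 2%N] = NInv n 1 1.
Proof. by rewrite /nmat /NInv /mprod /= /mmul /=; congr Mx2; ring. Qed.

Lemma nmat_op1 (s : seq nat) (x : nat) :
  nmat (2%N :: rcons s x.+1) = mmul (negm 2) (mmul (nmat (rcons s x)) lowshear).
Proof. by rewrite /nmat mprod_cons !mprod_rcons [negm x.+1]negm_succ_r -mmulA. Qed.

Lemma nmat_op2 (s : seq nat) (x : nat) :
  nmat (x.+1 :: rcons s 2%N) = mmul (mmul upshear (nmat (x :: s))) (negm 2).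
Proof. by rewrite /nmat !mprod_cons mprod_rcons [negm x.+1]negm_succ_l !mmulA. Qed.

Lemma NInv_op1 (n k k' : nat) :
  mmul (negm 2) (mmul (NInv n k k') lowshear) = NInv n (k + k') k'.
Proof. by rewrite /mmul /NInv /=; congr Mx2; ring. Qed.

Lemma NInv_op2 (n k k' : nat) :
  mmul (mmul upshear (NInv n k k')) (negm 2) = NInv n k (k + k').
Proof. by rewrite /mmul /NInv /=; congr Mx2; ring. Qed.

(* Shape of the tail data (d_1 ... d_r, c_1): all entries positive and r even;
   it stands for the positive string  c_s ... c_2 c_1  with r = s - 1. *)
Definition cf_shape (ds : seq nat) (c1 : nat) : bool :=
  [&& all (leq 1) ds, (0 < c1)%N & ~~ odd (size ds)].

Lemma cf_shape_upshear (ds : seq nat) (c1 : nat) : cf_shape ds c1 ->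
  exists ds' c1', cf_shape ds' c1' /\
    pmat (rcons ds' c1') = mmul upshear (pmat (rcons ds c1)).
Proof.
case: ds => [|d ds] /and3P[ds1 c0 ev].
  by exists [::], c1.+1; rewrite /pmat /= !mmulm1 posm_succ.
exists (d.+1 :: ds), c1; split; last by rewrite /pmat /= posm_succ mmulA.
by rewrite /cf_shape /= c0; move: ds1 => /= /andP[_ ->].
Qed.

Lemma cf_shape_negm2 (ds : seq nat) (c1 : nat) : cf_shape ds c1 ->
  (ds != [::]) || (c1 != 1%N) ->
  exists ds' c1', cf_shape ds' c1' /\
    pmat (rcons ds' c1') = mmul (negm 2) (pmat (rcons ds c1)).
Proof.
case: ds => [|d ds] /and3P[ds1 c0 ev] nontriv.
  case: c1 c0 nontriv => [|[|c]] // _ _.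
  exists [:: 1%N; 1%N], c.+1; split=> //.
  by rewrite /pmat /= !mmulm1 mmulA posm_11.
move: ds1 => /= /andP[d1 ds1].
case: d {nontriv} d1 ev => [//|[|d]] _ ev.
- case: ds ds1 ev => [//|d2 ds] /= /andP[d21 ds1] ev.
  case: d2 d21 => [//|d2] _.
  exists [:: 1%N, d2.+2 & ds], c1; split; first by rewrite /cf_shape /= ds1 c0.
  by rewrite /pmat /= !mmulA posm_1S.
- exists [:: 1%N, 1%N, d.+1 & ds], c1; split.
    by rewrite /cf_shape /= ds1 c0 negbK.
  by rewrite /pmat /= !mmulA posm_11.
Qed.

(* (k, k') admits a shaped expansion whose column sum is (k + k', k) or
   (k + k', k'), i.e. (k + k')/k or (k + k')/k' equals [c_s, ..., c_1, 1]^+. *)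
Definition cf_pair (k k' : nat) : Prop :=
  exists ds c1, cf_shape ds c1 /\
    (colsum (pmat (rcons ds c1)) = ((k + k')%N%:R, k%:R) \/
     colsum (pmat (rcons ds c1)) = ((k + k')%N%:R, k'%:R)).

Lemma cf_pair_base : cf_pair 1 1.
Proof.
by exists [::], 1%N; split=> //; left; rewrite /colsum /pmat /= /mmul /=; congr pair; ring.
Qed.

Lemma cf_pair_sym (k k' : nat) : cf_pair k k' -> cf_pair k' k.
Proof. by case=> ds [c1 [sh E]]; exists ds, c1; rewrite addnC; split; last case: E; auto. Qed.

Lemma cf_pair_addl (k k' : nat) : cf_pair k k' -> cf_pair (k + k') k'.
Proof.
case=> ds [c1 [sh E]].
have [[Ek nontriv]|Ek'] : (colsum (pmat (rcons ds c1)) = ((k + k')%N%:R, k%:R) /\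
    (ds != [::]) || (c1 != 1%N)) \/ colsum (pmat (rcons ds c1)) = ((k + k')%N%:R, k'%:R).
- case: E => Ek; last by right.
  have [triv|] := boolP ((ds == [::]) && (c1 == 1%N)); last by rewrite negb_and; left.
  (* At ([::], 1) the column sum is (2, 1), forcing k = k' = 1. *)
  case/andP: triv Ek => /eqP -> /eqP -> Ek; right.
  have col_one : colsum (pmat (rcons [::] 1%N)) = (2%N%:R, 1%N%:R).
    by rewrite /colsum /pmat /= /mmul /=; congr pair; ring.
  move: Ek; rewrite col_one => -[/eqP + /eqP]; rewrite !eqr_nat => /eqP Em /eqP Ek.
  have Ek' : k' = 1%N by move: Em; rewrite -Ek add1n => -[].
  by rewrite -Em Ek'.
- have [ds' [c1' [sh' E']]] := cf_shape_negm2 sh nontriv.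
  exists ds', c1'; split=> //; left.
  by rewrite E' colsum_negm2 Ek /=; congr pair; ring.
- have [ds' [c1' [sh' E']]] := cf_shape_upshear sh.
  exists ds', c1'; split=> //; right.
  by rewrite E' colsum_upshear Ek' /=; congr pair; ring.
Qed.

Lemma cf_pair_addr (k k' : nat) : cf_pair k k' -> cf_pair k (k + k').
Proof. by move=> /cf_pair_sym /cf_pair_addl; rewrite addnC => /cf_pair_sym. Qed.

Lemma reach_entries (n : nat) (s : seq nat) :
  (2 <= n)%N -> reach n s -> s != [::] /\ all (leq 2) s.
Proof.
move=> n2; elim=> [|t x _ [_ IH]|x t _ [_ IH]]; split=> //.
- by rewrite /= (leq_trans n2).
- by move: IH; rewrite /= !all_rcons /= => /andP[x2 ->]; rewrite (leq_trans x2).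
- by move: IH; rewrite /= all_rcons => /andP[x2 ->]; rewrite (leq_trans x2).
Qed.

Lemma reach_nmat (n : nat) (s : seq nat) : reach n s ->
  exists k k', [/\ (0 < k)%N, (0 < k')%N, coprime k k',
                   nmat s = NInv n k k' & cf_pair k k'].
Proof.
elim=> [|t x _ [k [k' [k0 k'0 cop E cf]]]|x t _ [k [k' [k0 k'0 cop E cf]]]].
- by exists 1%N, 1%N; split; rewrite ?NInv_base //; exact: cf_pair_base.
- exists (k + k')%N, k'; split; rewrite ?addn_gt0 ?k0 //.
  + by rewrite /coprime gcdnC gcdnDr gcdnC.
  + by rewrite nmat_op1 E NInv_op1.
  + exact: cf_pair_addl.
- exists k, (k + k')%N; split; rewrite ?addn_gt0 ?k0 //.
  + by rewrite /coprime gcdnDl.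
  + by rewrite nmat_op2 E NInv_op2.
  + exact: cf_pair_addr.
Qed.

Lemma pmat_palindrome (n : nat) (ds : seq nat) (c1 : nat) : (1 <= n)%N ->
  let P := pmat (rcons ds c1 ++ [:: 1%N; (n - 1)%N; c1.+1] ++ rev ds) in
  let pq := colsum (pmat (rcons ds c1)) in
  e11 P = n%:R * pq.1 ^+ 2 /\ e21 P = n%:R * pq.1 * pq.2 + mdet (pmat ds).
Proof.
move=> n1 /=; rewrite /pmat mprod_cat !mprod_cons -/(pmat (rev ds)) pmat_rev.
rewrite /pmat mprod_rcons; case: (mprod posm ds) => g11 g12 g21 g22.
by rewrite /mmul /mdet /= natrB //; split; ring.
Qed.

Lemma posfrac_palindrome (n : nat) (ds : seq nat) (c1 p q : nat) :
  (2 <= n)%N -> cf_shape ds c1 -> colsum (pmat (rcons ds c1)) = (p%:R, q%:R) ->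
  posfrac (rcons ds c1 ++ [:: 1%N; (n - 1)%N; c1.+1] ++ rev ds) =
    ((p ^ 2 * n)%N)%:R / ((p * n * q + 1)%N)%:R.
Proof.
move=> n2 /and3P[ds1 c0 ev] Epq.
have [] := posfrac_pmat (s := rcons ds c1 ++ [:: 1%N; (n - 1)%N; c1.+1] ++ rev ds).
- by rewrite -size_eq0 size_cat size_rcons.
- by rewrite !all_cat all_rcons all_rev ds1 /= c0 subn_gt0 n2.
move=> _ [_ ->]; have [E11 E21] := pmat_palindrome ds c1 (ltnW n2).
rewrite /ratio E11 E21 pmat_det -signr_odd (negbTE ev) expr0 Epq /=.
by congr (_ / _); ring.
Qed.

Theorem lemma3p2 (n : nat) (Sigma : seq nat) :
  (2 <= n)%N -> reach n Sigma ->
  (exists m k : nat, [/\ (0 < k)%N, (k < m)%N, coprime m k &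
     negfrac Sigma = ((m ^ 2 * n)%N)%:R / ((m * n * k + 1)%N)%:R])
  /\
  (exists cs : seq nat,
     [/\ (1 <= size cs)%N, all (fun c => 1 <= c)%N cs &
       let L := rev cs ++ [:: 1%N; (n - 1)%N; (head 0%N cs).+1] ++ behead cs in
       negfrac Sigma = posfrac L \/ negfrac (rev Sigma) = posfrac L]).
Proof.
move=> n2 reachS.
have [S0 S2] := reach_entries n2 reachS.
have [k [k' [k0 k'0 cop ES [ds [c1 [sh Ecol]]]]]] := reach_nmat reachS.
have [_ negS] := negfrac_nmat S0 S2.
have R0 : rev Sigma != [::] by rewrite -size_eq0 size_rev size_eq0.
have [_ negR] := negfrac_nmat R0 (etrans (all_rev _ _) S2).
split.
  exists (k + k')%N, k; split=> //; first by rewrite -{1}(addn0 k) ltn_add2l.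
    by rewrite /coprime gcdnC gcdnDl.
  by rewrite negS ES.
have /and3P[ds1 c0 _] := sh.
exists (c1 :: rev ds); split=> //=; first by rewrite c0 all_rev.
rewrite rev_cons revK.
case: Ecol => Epq; [left | right]; rewrite (posfrac_palindrome n2 sh Epq).
- by rewrite negS ES.
- by rewrite negR nmat_rev ES /ratio /= opprK.
Qed.
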